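(* Let $k\ge 2$, $\ell\ge1$, $m\ge1$ be integers with $m\cdot2^{-k\ell}<\frac12$, and let $\mathcal X=\{\Phi_i:0\le i<2^m\}$ be the set of hard CNF formulas described in the context. For all $0\le i,j<2^m$, $$d_{\mathrm{TV}}(\mu_i,\mu_j)\ge d_b(i,j)\cdot2^{-k\ell-2}.$$
   Context: Gadgets: on variables $U=\{v_{i,j}:i\in[\ell],j\in[k]\}$, for each $i\in\{1,\dots,\ell-1\}$, $j\in[k]$, let $c_{ij}$ be the clause on $\{v_{i,r}:r\ne j\}\cup\{v_{i+1,j}\}$ forbidding the all-True assignment if $i$ is odd and the all-False assignment if $i$ is even; let $\mathcal C$ be the set of these clauses and $c$ the clause on $\{v_{1,j}:j\in[k]\}$ forbidding all-True. The unrestricted depth-$\ell$ gadget is $(U,\mathcal C)$, the restricted one is $(U,\mathcal C\cup\{c\})$. Hard formulas: let $V$ have $mk\ell$ variables partitioned into $U_1,\dots,U_m$ each of size $k\ell$. For $0\le i<2^m$, write $i$ in binary with $m$ bits $i_1,\dots,i_m$; $\Phi_i=(V,\mathcal C_i)$ places on each $U_j$ the unrestricted depth-$\ell$ gadget if $i_j=0$ and the restricted depth-$\ell$ gadget if $i_j=1$. $\mu_i$ is the uniform distribution over satisfying assignments of $\Phi_i$, $d_{\mathrm{TV}}$ is total variation distance, and $d_b(i,j)$ is the number of positions where the $m$-bit binary representations of $i$ and $j$ differ. *)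

From mathcomp Require Import all_boot all_order all_algebra.
Set Implicit Arguments. Unset Strict Implicit. Unset Printing Implicit Defensive.
Import Order.TTheory GRing.Theory Num.Theory.
Local Open Scope ring_scope.

(* Generic CNF machinery.  All clauses used here are monotone: a clause on a
   variable set S "forbidding the all-b assignment" is satisfied by sigma iff
   not every variable of S takes value b. *)
Record clause (V : finType) := Clause { cvars : {set V}; cforbid : bool }.

Definition sat_clause (V : finType) (sigma : {ffun V -> bool}) (c : clause V) : bool :=
  ~~ [forall v in cvars c, sigma v == cforbid c].

Definition sat_cnf (V : finType) (F : seq (clause V)) (sigma : {ffun V -> bool}) : bool :=
  all (sat_clause sigma) F.

Definition sat_set (V : finType) (F : seq (clause V)) : {set {ffun V -> bool}} :=
  [set sigma | sat_cnf F sigma].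

Definition unif_sat (R : numFieldType) (V : finType) (F : seq (clause V))
  (sigma : {ffun V -> bool}) : R :=
  if sigma \in sat_set F then (#|sat_set F|%:R)^-1 else 0.

Definition dTV (R : numFieldType) (T : finType) (mu nu : T -> R) : R :=
  2^-1 * \sum_(x : T) `|mu x - nu x|.

(* Variables: v_{b; i, j} = variable (level i, column j) of block U_b,
   0-based: b < m, i < l, j < k. *)
Definition Var (m l k : nat) : finType := ('I_m * ('I_l * 'I_k))%type.

(* clause c_{ij} of the depth-l gadget on block b (0-based level i, i.+1 < l):
   variables {v_{i,r} : r <> j} u {v_{i+1,j}}; forbids all-True when the
   1-based level i+1 is odd (i.e. i even), all-False otherwise. *)
Definition chain_clause (m l k : nat) (b : 'I_m) (i : 'I_l) (j : 'I_k) : clause (Var m l k) :=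
  Clause [set v : Var m l k | (v.1 == b) &&
           (((v.2.1 == i :> nat) && (v.2.2 != j)) ||
            ((v.2.1 == i.+1 :> nat) && (v.2.2 == j)))]
         (~~ odd i).

Definition restr_clause (m l k : nat) (b : 'I_m) : clause (Var m l k) :=
  Clause [set v : Var m l k | (v.1 == b) && (v.2.1 == 0 :> nat)] true.

Definition gadget_clauses (m l k : nat) (b : 'I_m) : seq (clause (Var m l k)) :=
  [seq @chain_clause m l k b i j | i <- [seq i : 'I_l <- enum 'I_l | (i.+1 < l)%N], j <- enum 'I_k].

(* m-bit binary representation i_1 ... i_m (i_1 most significant);
   0-based position b corresponds to i_{b+1}. *)
Definition bitm (m : nat) (i : nat) (b : 'I_m) : bool := odd (i %/ 2 ^ (m - b.+1))%N.

Definition Phi (m l k : nat) (i : nat) : seq (clause (Var m l k)) :=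
  flatten [seq @gadget_clauses m l k b ++ (if @bitm m i b then [:: @restr_clause m l k b] else [::])
          | b <- enum 'I_m].

Definition mu (R : numFieldType) (m l k : nat) (i : nat) : {ffun Var m l k -> bool} -> R :=
  unif_sat R (Phi m l k i).

Definition db (m : nat) (i j : nat) : nat := #|[set b : 'I_m | @bitm m i b != @bitm m j b]|.

From mathcomp Require Import all_boot all_order all_algebra zify lra.
Set Implicit Arguments. Unset Strict Implicit. Unset Printing Implicit Defensive.
Import Order.TTheory GRing.Theory Num.Theory.

(* If bit b of i is 1 and bit b of j is 0, no satisfying assignment of Phi_i
   has the first level of block U_b all True, whereas under mu_j this event is
   fairly likely: overwriting block U_b with the levels True, False, True, ...
   keeps Phi_j satisfied and makes the first level all True, and forgets at most
   the 2^(kl) possible contents of the block.  Hence, for a set T of such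
   positions, the mu_j-probability q_T that some block of T has an all-True
   first level satisfies 1 - q_T <= 2^(kl) (q_(T+b) - q_T), so by induction
   q_T >= |T| 2^(-kl-1) as long as |T| <= 2^(kl).  As mu_i gives that event
   probability 0, d_TV(mu_i, mu_j) >= |T| 2^(-kl-1) for T the positions where
   i has a 1 and j a 0; averaging with the roles of i and j exchanged gives
   the bound d_b(i, j) 2^(-kl-2). *)

Lemma all_flatten (T : Type) (a : pred T) (ss : seq (seq T)) :
  all a (flatten ss) = all (all a) ss.
Proof. by elim: ss => //= s ss IH; rewrite all_cat IH. Qed.

Section TotalVariation.
Variables (R : realFieldType) (T : finType).
Local Open Scope ring_scope.

Lemma dTVC (p q : T -> R) : dTV p q = dTV q p.
Proof. by rewrite /dTV; congr (_ * _); apply: eq_bigr => x _; rewrite distrC. Qed.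

Lemma sumB_le_dTV (p q : T -> R) (E : pred T) :
  \sum_x p x = \sum_x q x -> \sum_(x | E x) (q x - p x) <= dTV p q.
Proof.
move=> pq; have : \sum_x (q x - p x) = 0 by rewrite sumrB pq subrr.
rewrite (bigID E) /= => /eqP; rewrite addr_eq0 => /eqP sumE.
rewrite /dTV ler_pdivlMl // mulr_natl mulr2n {2}sumE -sumrN [leRHS](bigID E) /=.
by apply: lerD; apply: ler_sum => x _; rewrite ?opprB ler_normr opprB lexx ?orbT.
Qed.

End TotalVariation.

Section UniformSat.
Variables (R : numFieldType) (V : finType) (F : seq (clause V)).
Local Open Scope ring_scope.

Lemma sum_unif_sat (E : {set {ffun V -> bool}}) :
  \sum_(x in E) unif_sat R F x = #|sat_set F :&: E|%:R / #|sat_set F|%:R.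
Proof.
rewrite /unif_sat -big_mkcondr (eq_bigl (mem (sat_set F :&: E))) => [|x].
  by rewrite sumr_const mulrC mulr_natr.
by rewrite !inE andbC.
Qed.

Lemma sum_unif_sat1 : sat_set F != set0 -> \sum_x unif_sat R F x = 1.
Proof.
rewrite -card_gt0 => SF; have := sum_unif_sat setT.
by rewrite (eq_bigl predT) ?setIT ?divff ?pnatr_eq0 -?lt0n // => x; rewrite inE.
Qed.

End UniformSat.

Section CoverGrowth.
Variables (X I : finType) (S : {set X}) (E : I -> {set X}) (D : {set I}) (N : nat).
Local Notation E_ T := (\bigcup_(b in T) E b).

Hypothesis card_fresh : forall b (T : {set I}), b \in D -> b \notin T ->
  (#|S :\: E_ T| <= N * #|S :&: E b :\: E_ T|)%N.

Lemma card_cover_growth (T : {set I}) : T \subset D -> (#|T| <= N)%N ->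
  (#|T| * #|S| <= 2 * N * #|S :&: E_ T|)%N.
Proof.
move cardT: #|T| => n; elim: n T cardT => [|n IH] T cardT sTD leTN; first by rewrite mul0n.
have [b Tb] : {b | b \in T} by apply/sigW/card_gt0P; rewrite cardT.
have cardT' : #|T :\ b| = n by move: cardT; rewrite (cardsD1 b) Tb => -[].
have ET : E_ T = E b :|: E_ (T :\ b) by rewrite (big_setD1 _ Tb).
have splitS : #|S :&: E_ T| = (#|S :&: E_ (T :\ b)| + #|S :&: E b :\: E_ (T :\ b)|)%N.
  rewrite -(cardsID (E_ (T :\ b)) (S :&: E_ T)); congr addn;
  apply: eq_card => x; rewrite ET !inE;
  by case: (x \in S); case: (x \in E b); case: (x \in E_ (T :\ b)).
have IHn := IH _ cardT' (subset_trans (subD1set T b) sTD) (ltnW leTN).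
have fresh := card_fresh (subsetP sTD b Tb) (negbT (setD11 b T)).
have leS : (#|S :&: E_ (T :\ b)| <= #|S|)%N by rewrite subset_leq_card ?subsetIl.
(* for s, y, z the sizes of S, S :&: E_ (T :\ b), S :&: E b :\: E_ (T :\ b):
   n s <= 2 N y and s - y <= N z give (n + 1) s <= 2 N (y + z) since n < N *)
rewrite cardsD in fresh; rewrite splitS; nia.
Qed.

End CoverGrowth.

Section HardFormulas.
Variables (m l k : nat).
Local Notation V := (Var m l k).
Local Notation assignment := {ffun V -> bool}.
Implicit Types (sigma tau : assignment) (b : 'I_m) (i : nat).

Definition block_vars b : {set V} := [set v : V | v.1 == b].

Lemma sat_clause_agree b sigma tau (c : clause V) : cvars c \subset block_vars b ->
  {in block_vars b, sigma =1 tau} -> sat_clause sigma c = sat_clause tau c.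
Proof.
move=> /subsetP cb st; congr negb; apply: eq_forallb => v.
by case cv: (v \in cvars c) => //=; rewrite st // cb.
Qed.

Lemma chain_clause_vars b (x : 'I_l) (y : 'I_k) :
  cvars (chain_clause b x y) \subset block_vars b.
Proof. by apply/subsetP => v; rewrite !inE => /andP []. Qed.

Lemma restr_clause_vars b : cvars (restr_clause l k b) \subset block_vars b.
Proof. by apply/subsetP => v; rewrite !inE => /andP []. Qed.

Lemma gadget_clausesP b sigma :
  reflect (forall (x : 'I_l) (y : 'I_k), (x.+1 < l)%N -> sat_clause sigma (chain_clause b x y))
    (all (sat_clause sigma) (gadget_clauses l k b)).
Proof.
apply: (iffP all_allpairsP) => [sat_b x y lx | sat_b x y].
  by apply: sat_b; [rewrite mem_filter lx | ]; rewrite mem_enum.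
by move=> + _; rewrite mem_filter => /andP [lx _]; apply: sat_b.
Qed.

Definition block_sat i b sigma :=
  all (sat_clause sigma) (gadget_clauses l k b) &&
  (bitm i b ==> sat_clause sigma (restr_clause l k b)).

Lemma sat_PhiP i sigma :
  reflect (forall b, block_sat i b sigma) (sigma \in sat_set (Phi m l k i)).
Proof.
rewrite inE /sat_cnf /Phi all_flatten all_map.
apply: (iffP allP) => [sat_b b | sat_b b _] /=.
  move: (sat_b b (mem_enum _ b)); rewrite /= all_cat /block_sat => /andP [-> ].
  by case: (bitm i b) => //= /andP [].
move: (sat_b b); rewrite /block_sat all_cat => /andP [-> ] /=.
by case: (bitm i b) => //= ->.
Qed.

Lemma block_sat_agree i b sigma tau :
  {in block_vars b, sigma =1 tau} -> block_sat i b sigma = block_sat i b tau.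
Proof.
move=> st; rewrite /block_sat (sat_clause_agree (restr_clause_vars _) st); congr andb.
apply/gadget_clausesP/gadget_clausesP => sat_b x y lx; move: (sat_b x y lx);
  by rewrite (sat_clause_agree (chain_clause_vars b x y) st).
Qed.

Definition odd_levels : assignment := [ffun v : V => odd v.2.1].

Lemma odd_levels_sat i : (1 < k)%N -> (0 < l)%N -> odd_levels \in sat_set (Phi m l k i).
Proof.
move=> k_gt1 l_gt0; apply/sat_PhiP => b; apply/andP; split.
  apply/gadget_clausesP => x y _.
  have [r ry] : {r : 'I_k | r != y}.
    have [-> | y1] := eqVneq y (Ordinal k_gt1); last by exists (Ordinal k_gt1); rewrite eq_sym.
    by exists (Ordinal (ltnW k_gt1)).
  apply/negP => /forallP /(_ (b, (x, r))); rewrite !inE /= !eqxx ry /= ffunE /=.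
  by case: (odd x).
apply/implyP => _; apply/negP => /forallP /(_ (b, (Ordinal l_gt0, Ordinal (ltnW k_gt1)))).
by rewrite !inE /= !eqxx /= ffunE.
Qed.

Definition even_levels_on b sigma : assignment :=
  [ffun v : V => if v.1 == b then ~~ odd v.2.1 else sigma v].

Lemma agree_even_levels_on b b' sigma :
  b' != b -> {in block_vars b', sigma =1 even_levels_on b sigma}.
Proof. by move=> b'b v; rewrite inE ffunE => /eqP ->; rewrite (negbTE b'b). Qed.

Lemma even_levels_on_sat i b sigma : bitm i b = false ->
  sigma \in sat_set (Phi m l k i) -> even_levels_on b sigma \in sat_set (Phi m l k i).
Proof.
move=> ib /sat_PhiP sat_sigma; apply/sat_PhiP => b'.
have [-> | b'b] := eqVneq b' b; last first.
  by rewrite -(block_sat_agree _ (agree_even_levels_on _ b'b)).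
rewrite /block_sat ib andbT; apply/gadget_clausesP => x y lx.
apply/negP => /forallP /(_ (b, (Ordinal lx, y))); rewrite !inE /= !eqxx /= orbT /= ffunE /= eqxx.
by case: (odd x).
Qed.

Definition top_true b : {set assignment} :=
  [set sigma | ~~ sat_clause sigma (restr_clause l k b)].

Lemma even_levels_on_top b sigma : even_levels_on b sigma \in top_true b.
Proof.
rewrite inE negbK; apply/forallP => v; apply/implyP; rewrite inE => /andP [/eqP vb /eqP v0].
by rewrite ffunE /= vb eqxx v0.
Qed.

Lemma sat_Phi_notin_top i b sigma :
  bitm i b -> sigma \in sat_set (Phi m l k i) -> sigma \notin top_true b.
Proof. by move=> ib /sat_PhiP /(_ b) /andP [_]; rewrite ib inE negbK. Qed.

Lemma even_levels_on_top_other b b' sigma :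
  b' != b -> (even_levels_on b sigma \in top_true b') = (sigma \in top_true b').
Proof.
move=> b'b; rewrite !inE.
by rewrite (sat_clause_agree (restr_clause_vars b') (agree_even_levels_on sigma b'b)).
Qed.

Lemma even_levels_on_cover b (T : {set 'I_m}) sigma : b \notin T ->
  (even_levels_on b sigma \in \bigcup_(b' in T) top_true b')
  = (sigma \in \bigcup_(b' in T) top_true b').
Proof.
move=> bT; have top_eq b' : b' \in T ->
    (even_levels_on b sigma \in top_true b') = (sigma \in top_true b').
  by move=> Tb'; apply: even_levels_on_top_other; apply: contraNneq bT => <-.
by apply/bigcupP/bigcupP => -[b' Tb' top]; exists b' => //; move: top; rewrite top_eq.
Qed.

Lemma card_sat_fresh_top i b (T : {set 'I_m}) : bitm i b = false -> b \notin T ->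
  (#|sat_set (Phi m l k i) :\: \bigcup_(b' in T) top_true b'|
   <= 2 ^ (k * l) * #|sat_set (Phi m l k i) :&: top_true b :\: \bigcup_(b' in T) top_true b'|)%N.
Proof.
move=> ib bT.
pose f sigma : assignment * {ffun 'I_l * 'I_k -> bool} :=
  (even_levels_on b sigma, [ffun p => sigma (b, p)]).
have f_inj : injective f.
  move=> s1 s2 [e12 r12]; apply/ffunP => v; have [vb | vb] := eqVneq v.1 b.
    by case: v vb => b' p /= ->; move/ffunP/(_ p): r12; rewrite !ffunE.
  by move/ffunP/(_ v): e12; rewrite !ffunE (negbTE vb).
have -> : (2 ^ (k * l) = #|[set: {ffun 'I_l * 'I_k -> bool}]|)%N.
  by rewrite cardsT card_ffun card_prod !card_ord card_bool mulnC.
rewrite mulnC -cardsX -(card_imset _ f_inj); apply: subset_leq_card.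
apply/subsetP => y /imsetP [sigma]; rewrite in_setD => /andP [notE S_sigma] ->.
rewrite in_setX in_setT andbT !in_setD in_setI even_levels_on_cover // notE.
by rewrite even_levels_on_top even_levels_on_sat.
Qed.

End HardFormulas.

Definition diff_bits m i j : {set 'I_m} := [set b | bitm i b && ~~ bitm j b].

Lemma db_diff_bits m i j : db m i j = (#|diff_bits m i j| + #|diff_bits m j i|)%N.
Proof.
rewrite /db -(cardsID [set b | bitm i b]); congr addn; apply: eq_card => b; rewrite !inE.
  by case: (bitm i b); case: (bitm j b).
by case: (bitm i b); case: (bitm j b).
Qed.

Local Open Scope ring_scope.

Lemma diff_bits_le_dTV (R : realFieldType) (m l k i j : nat) :
  (1 < k)%N -> (0 < l)%N -> (m <= 2 ^ (k * l))%N ->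
  #|diff_bits m i j|%:R / (2 * 2 ^+ (k * l)) <= dTV (@mu R m l k i) (@mu R m l k j).
Proof.
move=> k_gt1 l_gt0 m_le; set D := diff_bits m i j; set S := sat_set (Phi m l k j).
set E := \bigcup_(b in D) top_true l k b.
have growth : (#|D| * #|S| <= 2 * 2 ^ (k * l) * #|S :&: E|)%N.
  apply: (card_cover_growth (D := [set b | ~~ bitm j b])).
  - by move=> b T; rewrite inE => /negbTE; apply: card_sat_fresh_top.
  - by apply/subsetP => b; rewrite !inE => /andP [].
  - by apply: leq_trans (max_card _) _; rewrite card_ord.
have mu_i_E sigma : sigma \in E -> @mu R m l k i sigma = 0.
  case/bigcupP => b; rewrite inE => /andP [ib _] top; rewrite /mu /unif_sat ifN //.
  by apply: contraL top; apply: sat_Phi_notin_top.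
have nonempty i' : sat_set (Phi m l k i') != set0.
  by apply/set0Pn; exists (odd_levels m l k); apply: odd_levels_sat.
have := @sumB_le_dTV _ _ (@mu R m l k i) (@mu R m l k j) [in E].
rewrite !sum_unif_sat1 // => /(_ erefl); rewrite sumrB [X in _ - X]big1 // subr0 /mu sum_unif_sat.
apply: le_trans.
have s_gt0 : (0 < #|S|)%N by rewrite card_gt0 nonempty.
rewrite -natrX -natrM ler_pdivrMr ?ltr0n ?muln_gt0 ?expn_gt0 // mulrAC ler_pdivlMr ?ltr0n //.
by rewrite -!natrM ler_nat [leqRHS]mulnC.
Qed.

Theorem lemma5p7 (R : realFieldType) (k l m : nat) :
  (2 <= k)%N -> (1 <= l)%N -> (1 <= m)%N ->
  (m%:R / 2%:R ^+ (k * l) < 2%:R^-1 :> R) ->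
  forall i j : 'I_(2 ^ m),
    (db m i j)%:R / 2%:R ^+ (k * l + 2) <= dTV (@mu R m l k i) (@mu R m l k j).
Proof.
move=> k_ge2 l_ge1 _ small i j.
have m_le : (m <= 2 ^ (k * l))%N.
  move: small; rewrite -natrX ltr_pdivrMr ?ltr0n ?expn_gt0 // mulrC ltr_pdivlMr ?ltr0n //.
  rewrite -natrM ltr_nat; lia.
have le_ij := diff_bits_le_dTV R i j k_ge2 l_ge1 m_le.
have le_ji := diff_bits_le_dTV R j i k_ge2 l_ge1 m_le; rewrite dTVC in le_ji.
have N_gt0 : 0 < 2 ^+ (k * l) :> R by rewrite exprn_gt0.
rewrite !ler_pdivrMr ?mulr_gt0 // in le_ij le_ji.
rewrite db_diff_bits natrD exprD ler_pdivrMr ?mulr_gt0 //.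
lra.
Qed.
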